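(* Let $G$ be a discrete abelian group, let $X,Y$ be independent finitely supported $G$-valued random variables with $\mathbb{H}(X+Y)-\mathbb{H}(Y)\le\frac1{16}$, and let $\epsilon\in(0,1)$. Let $B=B(\mathrm{LSpec}(Y,\epsilon),4\epsilon)$. Let $Z$ be another finitely supported $G$-valued random variable. Then there is a set $S\subset\operatorname{supp}(X)$ such that $\log|S|\ge \mathbb{H}(Z)-4\,\mathrm{d}[X;Z]-2\log 2$ and $S-S\subset B$.
   Context: $\log$ is natural. $\mathbb{H}(X)=\sum_x p_X(x)\log(1/p_X(x))$ with $p_X(x)=\mathbb{P}(X=x)$. $\mathrm{d}[X;Z]=\mathbb{H}(X'-Z')-\tfrac12\mathbb{H}(X)-\tfrac12\mathbb{H}(Z)$ with $X',Z'$ independent copies of $X,Z$. $\hat G$ is the group of homomorphisms $G\to S^1=\{z\in\mathbb{C}:|z|=1\}$, and for $f\in\ell^1(G)$, $\hat f(\gamma)=\sum_{x\in G}f(x)\overline{\gamma(x)}$. $\mathrm{LSpec}(Y,\epsilon)=\{\gamma\in\hat G:|\hat{p_Y}(\gamma)|^2\ge 1-\epsilon^2/2\}$. For $\Gamma\subset\hat G$ and $\delta\in(0,2]$ (or larger), the Bohr set is $B(\Gamma,\delta)=\{x\in G:|\gamma(x)-1|\le\delta\text{ for all }\gamma\in\Gamma\}$. $S-S=\{s-s':s,s'\in S\}$. *)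

From HB Require Import structures.
From mathcomp Require Import all_boot all_order all_algebra.
From mathcomp Require Import all_classical all_reals.
From mathcomp Require Import exp.
From mathcomp Require Import complex.
Set Implicit Arguments. Unset Strict Implicit. Unset Printing Implicit Defensive.
Import Order.TTheory GRing.Theory Num.Theory.
Local Open Scope classical_set_scope.
Local Open Scope ring_scope.

Section Defs.
Variables (R : realType) (G : zmodType).

Definition supp (p : G -> R) : set G := [set x | p x != 0].

(* p is the law of a finitely supported G-valued random variable. *)
Definition is_fdist (p : G -> R) : Prop :=
  [/\ forall x, 0 <= p x, finite_set (supp p) & \sum_(x \in supp p) p x = 1].

Definition entropy (p : G -> R) : R := \sum_(x \in supp p) p x * ln (p x)^-1.

(* Law of X + Y for independent X ~ p, Y ~ q. *)
Definition conv (p q : G -> R) (z : G) : R := \sum_(x \in supp p) p x * q (z - x).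

(* Law of X' - Z' for independent X' ~ p, Z' ~ q. *)
Definition diff_law (p q : G -> R) (w : G) : R := \sum_(x \in supp p) p x * q (x - w).

Definition rdist (p q : G -> R) : R :=
  entropy (diff_law p q) - entropy p / 2 - entropy q / 2.

Definition is_character (g : G -> R[i]) : Prop :=
  (forall x y, g (x + y) = g x * g y) /\ (forall x, Normc.normc (g x) = 1).

Definition fourier (p : G -> R) (g : G -> R[i]) : R[i] :=
  \sum_(x \in supp p) real_complex R (p x) * conjc (g x).

Definition LSpec (p : G -> R) (eps : R) : set (G -> R[i]) :=
  [set g | is_character g /\ 1 - eps ^+ 2 / 2 <= Normc.normc (fourier p g) ^+ 2].

Definition Bohr (Gam : set (G -> R[i])) (delta : R) : set G :=
  [set x | forall g, Gam g -> Normc.normc (g x - 1) <= delta].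

End Defs.

From HB Require Import structures.
From mathcomp Require Import all_boot all_order all_algebra.
From mathcomp Require Import all_classical all_reals.
From mathcomp Require Import exp.
From mathcomp Require Import complex.
From mathcomp Require Import finmap.
From mathcomp Require Import ring lra.
Import Order.TTheory GRing.Theory Num.Theory.
Local Open Scope classical_set_scope.
Local Open Scope ring_scope.
Set Implicit Arguments. Unset Strict Implicit. Unset Printing Implicit Defensive.

(* Let D(x) be the Kullback-Leibler divergence of Y + x from X + Y.  Its average over
   x ~ X is H(X + Y) - H(Y) <= 1/16, so by Markov the set S of x in supp X with
   D(x) <= 1/8 carries at least half of the mass of X.  A Pinsker-type bound then shows
   that the laws of Y + s and Y + t overlap for s, t in S.  For gamma in LSpec(Y, eps)
   the variance of gamma(Y) is at most eps^2/2, so at most 1/8 of the mass of Y sees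
   gamma(Y) farther than 2 eps from its mean; the overlap therefore contains a point z
   with gamma(z - s) and gamma(z - t) both near the mean, whence |gamma(s - t) - 1| <= 4 eps.
   For the size of S write X - Z = X + (-Z) and split H(X - Z), averaged over x ~ X,
   according to x in S or not; Gibbs' inequality on both parts gives
   H(X - Z) >= a H(Z) + H(X) - a log |S| - log 2 with a = P(X in S) >= 1/2. *)

Section LogInequalities.
Variable R : realType.
Implicit Types a b x : R.

Lemma ln_inv x : ln x^-1 = - ln x.
Proof.
have [x0|x0] := leP x 0; last by rewrite lnV ?posrE.
by rewrite !ln0 ?oppr0 ?invr_le0.
Qed.

Lemma ln_le_subr1 x : 0 < x -> ln x <= x - 1.
Proof. by move=> x0; have := @le_ln1Dx R (x - 1); rewrite addrCA subrr addr0; apply; lra. Qed.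

Lemma gibbs_term a b : 0 <= a -> 0 < b -> a - b <= a * (ln a - ln b).
Proof.
rewrite le0r => /orP[/eqP->|a0] b0; first by rewrite mul0r sub0r oppr_le0 ltW.
have := ln_le_subr1 (divr_gt0 b0 a0); rewrite ln_div ?posrE // => h.
have : a * (ln b - ln a) <= a * (b / a - 1) by rewrite ler_pM2l.
have -> : a * (b / a - 1) = b - a by field; rewrite gt_eqF.
lra.
Qed.

Lemma hellinger_term a b : 0 <= a -> 0 < b ->
  (Num.sqrt a - Num.sqrt b) ^+ 2 <= a * (ln a - ln b) + b - a.
Proof.
move=> a0 b0; have [->|apos] := eqVneq a 0.
  by rewrite sqrtr0 sub0r sqrrN sqr_sqrtr ?(ltW b0) // mul0r; lra.
set u := Num.sqrt a; set v := Num.sqrt b.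
have u0 : 0 < u by rewrite sqrtr_gt0 lt0r apos.
have v0 : 0 < v by rewrite sqrtr_gt0.
have ua : a = u ^+ 2 by rewrite sqr_sqrtr.
have vb : b = v ^+ 2 by rewrite sqr_sqrtr // (ltW b0).
have lnab : ln a - ln b = 2 * (ln u - ln v) by rewrite ua vb !lnXn //; ring.
have := ler_wpM2l (ltW (mulr_gt0 (ltr0n _ 2) u0)) (gibbs_term (ltW u0) v0).
rewrite lnab ua vb; set L := ln u - ln v => h.
have -> : u ^+ 2 * (2 * L) + v ^+ 2 - u ^+ 2
        = (u - v) ^+ 2 + (2 * u * (u * L) - 2 * u * (u - v)) by ring.
by rewrite lerDl subr_ge0.
Qed.

Lemma pinsker_term a b : 0 <= a -> 0 < b ->
  `|a - b| <= 3 * (a * (ln a - ln b) + b - a) + (a + b) / 6.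
Proof.
move=> a0 b0; have := hellinger_term a0 b0.
set u := Num.sqrt a; set v := Num.sqrt b => hel.
have u0 : 0 <= u by rewrite sqrtr_ge0.
have v0 : 0 <= v by rewrite sqrtr_ge0.
have ua : a = u ^+ 2 by rewrite sqr_sqrtr.
have vb : b = v ^+ 2 by rewrite sqr_sqrtr // (ltW b0).
have -> : a - b = (u - v) * (u + v) by rewrite ua vb; ring.
rewrite normrM (ger0_norm (addr_ge0 u0 v0)).
have amgm : `|u - v| * (u + v) <= 3 * (u - v) ^+ 2 + (u + v) ^+ 2 / 12.
  rewrite -(real_normK (num_real (u - v))) -subr_ge0.
  have -> : 3 * `|u - v| ^+ 2 + (u + v) ^+ 2 / 12 - `|u - v| * (u + v)
          = 3 * (`|u - v| - (u + v) / 6) ^+ 2 by field.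
  by rewrite mulr_ge0 ?sqr_ge0.
have sqsum : (u + v) ^+ 2 <= 2 * (a + b).
  rewrite ua vb -subr_ge0.
  have -> : 2 * (u ^+ 2 + v ^+ 2) - (u + v) ^+ 2 = (u - v) ^+ 2 by ring.
  exact: sqr_ge0.
lra.
Qed.

Lemma binary_entropy_le_ln2 a b : 0 <= a -> 0 <= b -> a + b = 1 ->
  - ln 2 <= a * ln a + b * ln b.
Proof.
move=> a0 b0 ab; have h2 : 0 < 2^-1 :> R by rewrite invr_gt0.
have := gibbs_term a0 h2; have := gibbs_term b0 h2.
rewrite ln_inv opprK !mulrDr.
have : a * ln 2 + b * ln 2 = ln 2 by rewrite -mulrDl ab mul1r.
lra.
Qed.

End LogInequalities.

Section SeqSums.
Variable I : eqType.

Lemma big_mem_filter (V : nmodType) (s s' : seq I) (F : I -> V) :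
  uniq s -> uniq s' -> {subset s <= s'} ->
  \sum_(i <- s' | i \in s) F i = \sum_(i <- s) F i.
Proof.
move=> us us' ss'; rewrite -big_filter; apply/perm_big/uniq_perm => //.
  exact: filter_uniq.
by move=> i; rewrite mem_filter andb_idr //; apply: ss'.
Qed.

Lemma sum_seq_widen (V : nmodType) (s s' : seq I) (F : I -> V) :
  uniq s -> uniq s' -> {subset s <= s'} -> {in s', forall i, i \notin s -> F i = 0} ->
  \sum_(i <- s) F i = \sum_(i <- s') F i.
Proof.
move=> us us' ss' F0; rewrite [RHS](bigID (mem s)) /= big_mem_filter //.
by rewrite [X in _ = _ + X]big1_seq ?addr0 // => i /andP[nis is']; apply: F0.
Qed.

Lemma ler_sum_uniq_sub (R : numDomainType) (s s' : seq I) (F : I -> R) :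
  uniq s -> uniq s' -> {subset s <= s'} -> {in s', forall i, 0 <= F i} ->
  \sum_(i <- s) F i <= \sum_(i <- s') F i.
Proof.
move=> us us' ss' F0; rewrite [leRHS](bigID (mem s)) /= big_mem_filter // lerDl.
by rewrite big_seq_cond; apply: sumr_ge0 => i /andP[/F0].
Qed.

End SeqSums.

Lemma sum_shift (G : zmodType) (V : nmodType) (s U : seq G) (x : G) (F : G -> V) :
  uniq s -> uniq U -> {subset [seq y + x | y <- s] <= U} -> (forall y, y \notin s -> F y = 0) ->
  \sum_(z <- U) F (z - x) = \sum_(y <- s) F y.
Proof.
move=> us uU sU F0; symmetry.
rewrite (eq_bigr (fun y => F (y + x - x))) => [|y _]; last by rewrite addrK.
rewrite -(big_map (+%R^~ x) xpredT (fun z => F (z - x))).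
apply: sum_seq_widen => //; first by rewrite map_inj_uniq //; apply: addIr.
move=> z _ zs; apply: F0; apply: contra zs => zxs.
by apply/mapP; exists (z - x); rewrite ?subrK.
Qed.

Section FiniteDistributions.
Variables (R : realType) (G : zmodType).
Implicit Types (p f : G -> R).

Definition enum_supp p : seq G := fset_set (supp p).

Lemma enum_supp_uniq p : uniq (enum_supp p). Proof. exact: fset_uniq. Qed.

Lemma mem_enum_supp p x : finite_set (supp p) -> (x \in enum_supp p) = (p x != 0).
Proof. by move=> fin; rewrite in_fset_set //; apply/idP/idP => [/set_mem|/mem_set]. Qed.

Lemma fsum_enum_supp (V : nmodType) p (F : G -> V) : finite_set (supp p) ->
  \sum_(x \in supp p) F x = \sum_(x <- enum_supp p) F x.
Proof. exact: fsbig_finite. Qed.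

Section Fdist.
Variables (f : G -> R) (hf : is_fdist f).

Lemma fdist_ge0 x : 0 <= f x. Proof. by case: hf. Qed.

Lemma fdist_finite : finite_set (supp f). Proof. by case: hf. Qed.

Lemma mem_enum_supp_fdist x : (x \in enum_supp f) = (f x != 0).
Proof. exact: mem_enum_supp fdist_finite. Qed.

Lemma enum_supp_gt0 x : x \in enum_supp f -> 0 < f x.
Proof. by rewrite mem_enum_supp_fdist lt0r fdist_ge0 andbT. Qed.

Lemma sum_enum_supp : \sum_(x <- enum_supp f) f x = 1.
Proof. by case: hf => _ fin <-; rewrite fsum_enum_supp. Qed.

Lemma fdist_sum_le1 (s : seq G) : uniq s -> \sum_(x <- s) f x <= 1.
Proof.
move=> us; rewrite -sum_enum_supp (bigID (fun x => f x != 0)) /=.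
rewrite [X in _ + X]big1 => [|x /negPn/eqP //]; rewrite addr0 -big_filter.
apply: ler_sum_uniq_sub => [||x|x _]; [exact: filter_uniq | exact: enum_supp_uniq | |].
  by rewrite mem_filter mem_enum_supp_fdist => /andP[].
exact: fdist_ge0.
Qed.

End Fdist.
End FiniteDistributions.

Section WeightedSums.
Variables (R : realType) (I : eqType).

Lemma gibbs (s : seq I) (a b : I -> R) :
  {in s, forall i, 0 <= a i} -> {in s, forall i, 0 < b i} -> \sum_(i <- s) b i <= 1 ->
  \sum_(i <- s) a i * ln (a i)^-1 + (\sum_(i <- s) a i) * ln (\sum_(i <- s) a i)
  <= \sum_(i <- s) a i * ln (b i)^-1.
Proof.
move=> a0 b0 b1; set m := \sum_(i <- s) a i.
have m0 : 0 <= m by rewrite /m big_seq; apply: sumr_ge0.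
(* [gibbs_term] compares [a] with the rescaled weights [m b] *)
have key : \sum_(i <- s) (a i - m * b i)
    <= \sum_(i <- s) (a i * ln (b i)^-1 - a i * ln (a i)^-1 - a i * ln m).
  rewrite big_seq [leRHS]big_seq; apply: ler_sum => i si.
  have [->|ai] := eqVneq (a i) 0.
    by rewrite !mul0r !subr0 sub0r oppr_le0 mulr_ge0 // ltW // b0.
  have mpos : 0 < m.
    apply: lt_le_trans (_ : a i <= m); first by rewrite lt0r ai a0.
    rewrite /m (big_rem i) //= lerDl big_seq.
    by apply: sumr_ge0 => j /mem_rem /a0.
  have := gibbs_term (a0 i si) (mulr_gt0 mpos (b0 i si)).
  by rewrite lnM ?posrE ?b0 // !ln_inv; lra.
rewrite !sumrB -!mulr_sumr -mulr_suml -/m in key.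
have : 0 <= m * (1 - \sum_(i <- s) b i) by rewrite mulr_ge0 // subr_ge0.
lra.
Qed.

(* If every i in U lay in P or in Q, summing [a i + b i - |a i - b i| = 2 min (a i) (b i)]
   over U would contradict the hypothesis. *)
Lemma exists_common_good (U : seq I) (a b : I -> R) (P Q : pred I) :
  {in U, forall i, 0 <= a i} -> {in U, forall i, 0 <= b i} ->
  \sum_(i <- U) `|a i - b i| + 2 * (\sum_(i <- U | P i) a i + \sum_(i <- U | Q i) b i)
    < \sum_(i <- U) (a i + b i) ->
  exists i, ~~ P i && ~~ Q i.
Proof.
move=> a0 b0; apply: contraPP => /forallNP nogood; apply/negP; rewrite -leNgt.
rewrite mulrDr !mulr_sumr [\sum_(i <- U | P i) _]big_mkcond [\sum_(i <- U | Q i) _]big_mkcond.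
rewrite -!big_split /= big_seq [leRHS]big_seq.
apply: ler_sum => i iU.
have PQ : P i || Q i.
  by apply/negPn/negP => /norP[nP nQ]; apply: (nogood i); rewrite nP nQ.
have := ler_norm (a i - b i); have := ler_norm (b i - a i); rewrite distrC.
have := a0 i iU; have := b0 i iU.
by case: (P i) PQ; case: (Q i) => //= *; lra.
Qed.

End WeightedSums.

Section Divergence.
Variables (R : realType) (G : zmodType).
Implicit Types (p f g : G -> R).

Lemma entropy_enum_supp f : is_fdist f ->
  entropy f = \sum_(x <- enum_supp f) f x * ln (f x)^-1.
Proof. by move=> hf; rewrite /entropy (fsum_enum_supp _ (fdist_finite hf)). Qed.

Definition kl f g : R := \sum_(y \in supp f) f y * (ln (f y) - ln (g y)).

Lemma entropy_add_kl f g : is_fdist f ->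
  entropy f + kl f g = \sum_(y <- enum_supp f) f y * ln (g y)^-1.
Proof.
move=> hf; rewrite entropy_enum_supp // /kl (fsum_enum_supp _ (fdist_finite hf)).
rewrite -big_split /=.
by apply: eq_bigr => y _; rewrite !ln_inv; ring.
Qed.

Lemma kl_ge0 f g : is_fdist f -> {in enum_supp f, forall y, 0 < g y} ->
  \sum_(y <- enum_supp f) g y <= 1 -> 0 <= kl f g.
Proof.
move=> hf g0 g1; have := gibbs (fun y ys => ltW (enum_supp_gt0 hf ys)) g0 g1.
rewrite sum_enum_supp // ln1 mulr0 addr0 -(entropy_add_kl g hf).
by rewrite entropy_enum_supp // lerDl.
Qed.

Lemma partial_entropy_le (s : seq G) f : s != [::] -> {in s, forall x, 0 < f x} ->
  \sum_(x <- s) f x * ln (f x)^-1 + (\sum_(x <- s) f x) * ln (\sum_(x <- s) f x)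
  <= (\sum_(x <- s) f x) * ln (size s)%:R.
Proof.
move=> s0 f0; have n0 : 0 < (size s)%:R :> R by rewrite ltr0n lt0n size_eq0.
have uniform : \sum_(x <- s) (size s)%:R^-1 <= 1 :> R.
  rewrite big_const_seq count_predT.
  suff -> : forall k, iter k (+%R (size s)%:R^-1) 0 = (size s)%:R^-1 *+ k :> R.
    by rewrite -(mulr_natr (size s)%:R^-1) mulVf ?gt_eqF.
  by elim=> //= k ->; rewrite mulrS.
have ninv : 0 < (size s)%:R^-1 :> R by rewrite invr_gt0.
have := gibbs (fun x xs => ltW (f0 x xs)) (fun _ _ => ninv) uniform.
by rewrite invrK -mulr_suml.
Qed.

Lemma markov_half p (phi : G -> R) t : is_fdist p -> 0 < t ->
  {in enum_supp p, forall x, 0 <= phi x} -> \sum_(x <- enum_supp p) p x * phi x <= t / 2 ->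
  1 / 2 <= \sum_(x <- enum_supp p | phi x <= t) p x.
Proof.
move=> hp t0 phi0 hphi.
have mass := sum_enum_supp hp; rewrite (bigID (fun x => phi x <= t)) /= in mass.
rewrite (bigID (fun x => phi x <= t)) /= in hphi.
have low : 0 <= \sum_(x <- enum_supp p | phi x <= t) p x * phi x.
  rewrite big_seq_cond; apply: sumr_ge0 => x /andP[/phi0 ? _].
  by rewrite mulr_ge0 ?(fdist_ge0 hp).
have high : t * \sum_(x <- enum_supp p | ~~ (phi x <= t)) p x
    <= \sum_(x <- enum_supp p | ~~ (phi x <= t)) p x * phi x.
  rewrite mulr_sumr big_seq_cond [leRHS]big_seq_cond; apply: ler_sum => x /andP[_].
  by rewrite -ltNge mulrC => /ltW; apply: ler_wpM2l; apply: (fdist_ge0 hp).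
nra.
Qed.

End Divergence.

Section Reindex.
Variables (R : realType) (G : zmodType) (f g : G -> G).
Hypotheses (fK : cancel f g) (gK : cancel g f).

Lemma supp_comp (p : G -> R) : supp (p \o f) = g @` supp p.
Proof.
apply/seteqP; split => [x px|_ [c pc <-]]; first by exists (f x); rewrite ?fK.
by rewrite /supp /= gK.
Qed.

Lemma fsum_supp_comp (V : nmodType) (p : G -> R) (F : G -> V) :
  \sum_(x \in supp (p \o f)) F (f x) = \sum_(c \in supp p) F c.
Proof.
rewrite supp_comp fsbig_image; last by move=> ? ? _ _; apply: (can_inj gK).
by apply: eq_fsbigr => c _; rewrite gK.
Qed.

Lemma fdist_comp (p : G -> R) : is_fdist p -> is_fdist (p \o f).
Proof.
case=> p0 fin p1; split => [x||]; first exact: p0.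
  by rewrite supp_comp; apply: finite_image.
by rewrite (fsum_supp_comp p p).
Qed.

Lemma entropy_comp (p : G -> R) : entropy (p \o f) = entropy p.
Proof. exact: (fsum_supp_comp p (fun c => p c * ln (p c)^-1)). Qed.

End Reindex.

Lemma diff_lawE (R : realType) (G : zmodType) (p q : G -> R) :
  diff_law p q = conv p (q \o (-%R : G -> G)).
Proof. by apply/funext => w; apply: eq_fsbigr => x _; rewrite /= opprB. Qed.

Lemma normc_sqr (R : realType) (z : R[i]) :
  Normc.normc z ^+ 2 = complex.Re z ^+ 2 + complex.Im z ^+ 2.
Proof. by case: z => a b; rewrite /= sqr_sqrtr // addr_ge0 ?sqr_ge0. Qed.

Lemma character_sub_near1 (R : realType) (G : zmodType) (gam : G -> R[i]) (m : R[i])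
    (delta : R) (u v : G) :
  is_character gam -> Normc.normc (gam u - m) <= delta -> Normc.normc (gam v - m) <= delta ->
  Normc.normc (gam (u - v) - 1) <= 2 * delta.
Proof.
case=> gamD gam1 hu hv.
have shift : gam (u - v) * gam v = gam u by rewrite -gamD subrK.
have -> : Normc.normc (gam (u - v) - 1) = Normc.normc (gam u - gam v).
  by rewrite -shift -{2}[gam v]mul1r -mulrBl Normc.normcM gam1 mulr1.
have -> : gam u - gam v = (gam u - m) + - (gam v - m) by rewrite opprB addrA subrK.
by apply: le_trans (le_normcD _ _) _; rewrite normcN; lra.
Qed.

Section LargeSpectrum.
Local Open Scope complex_scope.
Variables (R : realType) (G : zmodType) (q : G -> R) (gam : G -> R[i]).

Definition spectral_mean : R[i] :=
  (\sum_(y <- enum_supp q) q y * complex.Re (gam y))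
    +i* (\sum_(y <- enum_supp q) q y * complex.Im (gam y)).

Definition spectral_outlier (delta : R) y := delta < Normc.normc (gam y - spectral_mean).

Variable eps : R.
Hypotheses (hq : is_fdist q) (hgam : LSpec q eps gam).

Let re y := complex.Re (gam y).
Let im y := complex.Im (gam y).
Let mre := \sum_(y <- enum_supp q) q y * re y.
Let mim := \sum_(y <- enum_supp q) q y * im y.

Lemma character_sqr y : re y ^+ 2 + im y ^+ 2 = 1.
Proof. by case: hgam => [[_ n1] _]; rewrite -normc_sqr n1 expr1n. Qed.

Lemma fourier_conj_mean : fourier q gam = conjc spectral_mean.
Proof.
rewrite /fourier (fsum_enum_supp _ (fdist_finite hq)) /spectral_mean.
elim: (enum_supp q) => [|y s IH]; first by rewrite !big_nil /= oppr0.
by rewrite !big_cons IH /re /im; case: (gam y) => a b /=; simpc.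
Qed.

Lemma spectral_mean_norm : 1 - eps ^+ 2 / 2 <= Normc.normc spectral_mean ^+ 2.
Proof. by case: hgam => _; rewrite fourier_conj_mean !normc_sqr /= sqrrN. Qed.

Lemma spectral_variance :
  \sum_(y <- enum_supp q) q y * Normc.normc (gam y - spectral_mean) ^+ 2
  = 1 - Normc.normc spectral_mean ^+ 2.
Proof.
have e y : q y * Normc.normc (gam y - spectral_mean) ^+ 2 =
    q y * (re y ^+ 2 + im y ^+ 2) - 2 * mre * (q y * re y) - 2 * mim * (q y * im y)
    + (mre ^+ 2 + mim ^+ 2) * q y.
  have -> : spectral_mean = mre +i* mim by [].
  by rewrite normc_sqr /re /im; case: (gam y) => a b /=; ring.
under eq_bigr do rewrite e character_sqr mulr1.
rewrite normc_sqr big_split /= !sumrB -!mulr_sumr sum_enum_supp // -/mre -/mim; ring.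
Qed.

(* Chebyshev, with the variance bound [1 - |mean|^2 <= eps^2 / 2]. *)
Lemma spectral_outlier_mass : 0 < eps ->
  \sum_(y <- enum_supp q | spectral_outlier (2 * eps) y) q y <= 1 / 8.
Proof.
move=> eps0.
have : (2 * eps) ^+ 2 * \sum_(y <- enum_supp q | spectral_outlier (2 * eps) y) q y
    <= \sum_(y <- enum_supp q) q y * Normc.normc (gam y - spectral_mean) ^+ 2.
  rewrite mulr_sumr [leRHS](bigID (spectral_outlier (2 * eps))) /= -[leLHS]addr0.
  apply: lerD; last first.
    rewrite big_seq_cond; apply: sumr_ge0 => y _.
    by rewrite mulr_ge0 ?(fdist_ge0 hq) ?sqr_ge0.
  apply: ler_sum => y out; rewrite mulrC ler_wpM2l ?(fdist_ge0 hq) //.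
  have n0 : 0 <= 2 * eps by rewrite mulr_ge0 // ltW.
  by rewrite ltW // ltr_pXn2r // nnegrE // (le_trans n0 (ltW out)).
rewrite spectral_variance; have := spectral_mean_norm.
have : 0 < eps ^+ 2 by rewrite exprn_gt0.
nra.
Qed.

End LargeSpectrum.

Section Convolution.
Variables (R : realType) (G : zmodType) (p q : G -> R).
Hypotheses (hp : is_fdist p) (hq : is_fdist q).
Let r := conv p q.

Lemma convE z : r z = \sum_(x <- enum_supp p) p x * q (z - x).
Proof. exact: fsum_enum_supp _ (fdist_finite hp). Qed.

Lemma conv_ge0 z : 0 <= r z.
Proof.
rewrite convE big_seq; apply: sumr_ge0 => x _.
by rewrite mulr_ge0 ?(fdist_ge0 hp) ?(fdist_ge0 hq).
Qed.

Lemma mul_le_conv x y : p x * q y <= r (y + x).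
Proof.
have [->|px] := eqVneq (p x) 0; first by rewrite mul0r conv_ge0.
rewrite convE (bigD1_seq x) ?enum_supp_uniq ?mem_enum_supp_fdist //= addrK lerDl.
by apply: sumr_ge0 => z _; rewrite mulr_ge0 ?(fdist_ge0 hp) ?(fdist_ge0 hq).
Qed.

Lemma conv_gt0 x y : p x != 0 -> q y != 0 -> 0 < r (y + x).
Proof.
move=> px qy; apply: lt_le_trans (mul_le_conv x y).
by rewrite mulr_gt0 // lt0r ?px ?qy ?(fdist_ge0 hp) ?(fdist_ge0 hq).
Qed.

Lemma conv_finite : finite_set (supp r).
Proof.
apply: sub_finite_set (finite_image2 +%R (fdist_finite hq) (fdist_finite hp)).
move=> z; rewrite /supp /= convE => rz.
have [x xp qzx] : exists2 x, x \in enum_supp p & q (z - x) != 0.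
  apply/hasP; rewrite -[has _ _]negbK; apply: contra rz => /hasPn q0.
  by rewrite big1_seq // => x /andP[_ /q0 /negPn /eqP ->]; rewrite mulr0.
by exists (z - x) => //; exists x; rewrite ?subrK // -(mem_enum_supp_fdist hp).
Qed.

Lemma mem_enum_supp_conv x y : p x != 0 -> q y != 0 -> y + x \in enum_supp r.
Proof.
by move=> px qy; rewrite (mem_enum_supp _ conv_finite) gt_eqF // conv_gt0.
Qed.

Lemma sum_conv_shift x (F : G -> R) : p x != 0 -> (forall y, q y = 0 -> F y = 0) ->
  \sum_(z <- enum_supp r) F (z - x) = \sum_(y <- enum_supp q) F y.
Proof.
move=> px F0; apply: sum_shift; rewrite ?enum_supp_uniq //.
  by move=> _ /mapP[y yq ->]; rewrite mem_enum_supp_conv // -(mem_enum_supp_fdist hq).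
by move=> y; rewrite mem_enum_supp_fdist // negbK => /eqP /F0.
Qed.

Lemma sum_conv (F : G -> R) :
  \sum_(z <- enum_supp r) r z * F z
  = \sum_(x <- enum_supp p) p x * \sum_(y <- enum_supp q) q y * F (y + x).
Proof.
under eq_bigr do rewrite convE // mulr_suml.
rewrite exchange_big /=; apply: eq_big_seq => x xp; rewrite mulr_sumr.
rewrite -(sum_conv_shift (x := x) (F := fun y => p x * (q y * F (y + x)))).
- by apply: eq_bigr => z _; rewrite subrK mulrA.
- by rewrite -(mem_enum_supp_fdist hp).
- by move=> y ->; rewrite mul0r mulr0.
Qed.

Lemma conv_fdist : is_fdist r.
Proof.
split; [exact: conv_ge0 | exact: conv_finite |].
rewrite (fsum_enum_supp _ conv_finite).
under eq_bigr do rewrite -[r _]mulr1.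
rewrite sum_conv -[RHS](sum_enum_supp hp); apply: eq_bigr => x _.
by under eq_bigr do rewrite mulr1; rewrite sum_enum_supp // mulr1.
Qed.

Lemma entropy_conv :
  entropy r = entropy q + \sum_(x <- enum_supp p) p x * kl q (fun y => r (y + x)).
Proof.
rewrite /entropy (fsum_enum_supp _ conv_finite) sum_conv.
under eq_bigr do rewrite -entropy_add_kl // mulrDr.
by rewrite big_split /= -mulr_suml sum_enum_supp // mul1r.
Qed.

Lemma kl_shift_ge0 x : p x != 0 -> 0 <= kl q (fun y => r (y + x)).
Proof.
move=> px; apply: kl_ge0 => // [y|].
  by rewrite mem_enum_supp_fdist // => /conv_gt0; apply.
rewrite -(big_map (+%R^~ x) xpredT r); apply: fdist_sum_le1; first exact: conv_fdist.
by rewrite map_inj_uniq ?enum_supp_uniq //; apply: addIr.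
Qed.

Lemma entropy_le_conv_r : entropy q <= entropy r.
Proof.
rewrite entropy_conv lerDl big_seq; apply: sumr_ge0 => x xp.
by rewrite mulr_ge0 ?(fdist_ge0 hp) // kl_shift_ge0 // -(mem_enum_supp_fdist hp).
Qed.

Lemma restricted_entropy_le_conv (L : seq G) : uniq L -> {subset L <= enum_supp p} ->
  \sum_(x <- L) p x * ln (p x)^-1 + (\sum_(x <- L) p x) * ln (\sum_(x <- L) p x)
  <= \sum_(x <- L) p x * (entropy q + kl q (fun y => r (y + x))).
Proof.
move=> uL Lp; under [X in _ <= X]eq_bigr do rewrite entropy_add_kl // mulr_sumr.
rewrite exchange_big /= -[X in X <= _]mul1r -{1}(sum_enum_supp hq) mulr_suml.
rewrite big_seq [leRHS]big_seq; apply: ler_sum => y yq.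
under [X in _ <= X]eq_bigr do rewrite mulrCA.
rewrite -mulr_sumr ler_wpM2l ?(fdist_ge0 hq) //.
apply: gibbs => [x _|x /Lp xp|]; first exact: (fdist_ge0 hp).
  by apply: conv_gt0; rewrite -mem_enum_supp_fdist.
rewrite -(big_map (+%R y) xpredT r); apply: fdist_sum_le1; first exact: conv_fdist.
by rewrite map_inj_uniq //; apply: addrI.
Qed.

Lemma entropy_le_conv_l : entropy p <= entropy r.
Proof.
have := restricted_entropy_le_conv (enum_supp_uniq p) (fun x xp => xp).
rewrite sum_enum_supp // ln1 mulr0 addr0 -entropy_enum_supp //.
under [X in _ <= X]eq_bigr do rewrite mulrDr.
by rewrite big_split /= -mulr_suml sum_enum_supp // mul1r -entropy_conv.
Qed.

Lemma mass_entropy_bound (S : seq G) : uniq S -> S != [::] -> {subset S <= enum_supp p} ->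
  (\sum_(x <- S) p x) * entropy q + entropy p - entropy r - ln 2
  <= (\sum_(x <- S) p x) * ln (size S)%:R.
Proof.
move=> uS S0 Sp; set a := \sum_(x <- S) p x; pose T := [seq x <- enum_supp p | x \notin S].
have split (F : G -> R) : \sum_(x <- enum_supp p) F x = \sum_(x <- S) F x + \sum_(x <- T) F x.
  by rewrite (bigID (mem S)) /= big_mem_filter ?enum_supp_uniq // big_filter.
set b := \sum_(x <- T) p x.
have ab : a + b = 1 by rewrite -(sum_enum_supp hp) split.
have b0 : 0 <= b by rewrite /b big_seq; apply: sumr_ge0 => x _; apply: (fdist_ge0 hp).
have a0 : 0 <= a by rewrite /a big_seq; apply: sumr_ge0 => x _; apply: (fdist_ge0 hp).
have Hr := entropy_conv; rewrite split in Hr.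
have Hp := entropy_enum_supp hp; rewrite split in Hp.
have klS : 0 <= \sum_(x <- S) p x * kl q (fun y => r (y + x)).
  rewrite big_seq; apply: sumr_ge0 => x /Sp xp.
  by rewrite mulr_ge0 ?(fdist_ge0 hp) // kl_shift_ge0 // -mem_enum_supp_fdist.
have Tp : {subset T <= enum_supp p} by move=> x; rewrite mem_filter => /andP[].
have hT := restricted_entropy_le_conv (filter_uniq _ (enum_supp_uniq p)) Tp.
rewrite (eq_bigr _ (fun x _ => mulrDr _ _ _)) big_split /= -mulr_suml -/b in hT.
have hS := partial_entropy_le S0 (fun x xS => enum_supp_gt0 hp (Sp x xS)); rewrite -/a in hS.
have := binary_entropy_le_ln2 a0 b0 ab.
have : a * entropy q + b * entropy q = entropy q by rewrite -mulrDl ab mul1r.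
lra.
Qed.

Lemma ruzsa_support_bound (S : seq G) : uniq S -> {subset S <= enum_supp p} ->
  1 / 2 <= \sum_(x <- S) p x ->
  entropy q - 4 * (entropy r - entropy p / 2 - entropy q / 2) - 2 * ln 2
  <= ln (size S)%:R.
Proof.
move=> uS Sp half.
have S0 : S != [::] by apply: contraTneq half => ->; rewrite big_nil -ltNge; lra.
have := mass_entropy_bound uS S0 Sp.
have := entropy_le_conv_r; have := entropy_le_conv_l.
have ln2 : 0 <= ln 2 :> R by rewrite ln_ge0 // ler1n.
set a := \sum_(x <- S) p x; set d := entropy r - entropy p / 2 - entropy q / 2.
move=> Hpr Hqr key; rewrite -/a in half.
have a0 : 0 < a by lra.
rewrite -subr_ge0 -(pmulr_rge0 _ a0).
have -> : a * (ln (size S)%:R - (entropy q - 4 * d - 2 * ln 2))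
    = (a * ln (size S)%:R - (a * entropy q + entropy p - entropy r - ln 2))
      + (2 * a - 1) * (2 * d + ln 2) + (entropy r - entropy q) by rewrite /d; field.
rewrite -addrA; apply: addr_ge0; first by rewrite subr_ge0.
by apply: addr_ge0; [apply: mulr_ge0; rewrite /d; lra | rewrite subr_ge0].
Qed.

Lemma tv_shift_le x : p x != 0 ->
  \sum_(z <- enum_supp r) `|q (z - x) - r z| <= 3 * kl q (fun y => r (y + x)) + 1 / 3.
Proof.
move=> px.
have shift F := @sum_conv_shift x F px.
have mass_q : \sum_(z <- enum_supp r) q (z - x) = 1 by rewrite shift // sum_enum_supp.
have mass_r := sum_enum_supp conv_fdist.
have kl_r : \sum_(z <- enum_supp r) q (z - x) * (ln (q (z - x)) - ln (r z))
    = kl q (fun y => r (y + x)).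
  rewrite /kl (fsum_enum_supp _ (fdist_finite hq)).
  rewrite -(shift (fun y => q y * (ln (q y) - ln (r (y + x))))) => [|y ->]; last by rewrite mul0r.
  by apply: eq_bigr => z _; rewrite subrK.
apply: le_trans (_ : \sum_(z <- enum_supp r)
    (3 * (q (z - x) * (ln (q (z - x)) - ln (r z)) + r z - q (z - x)) + (q (z - x) + r z) / 6) <= _).
  rewrite big_seq [leRHS]big_seq; apply: ler_sum => z zr.
  by apply: pinsker_term; [exact: (fdist_ge0 hq) | exact: (enum_supp_gt0 conv_fdist)].
rewrite (eq_bigr (fun z => 3 * (q (z - x) * (ln (q (z - x)) - ln (r z)))
    + (19 / 6 * r z - 17 / 6 * q (z - x)))) => [|z _]; last by field.
by rewrite big_split sumrB /= -!mulr_sumr kl_r mass_q mass_r; lra.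
Qed.

Lemma bohr_shift_sub (eps : R) (gam : G -> R[i]) s t : 0 < eps -> LSpec q eps gam ->
  p s != 0 -> p t != 0 ->
  kl q (fun y => r (y + s)) <= 1 / 8 -> kl q (fun y => r (y + t)) <= 1 / 8 ->
  Normc.normc (gam (s - t) - 1) <= 4 * eps.
Proof.
move=> eps0 hgam ps pt hs ht; set out := spectral_outlier q gam (2 * eps).
have out_mass x : p x != 0 -> \sum_(z <- enum_supp r | out (z - x)) q (z - x) <= 1 / 8.
  move=> px; rewrite big_mkcond /= (sum_conv_shift (F := fun y => if out y then q y else 0)) //.
    by rewrite -big_mkcond; apply: spectral_outlier_mass.
  by move=> y ->; case: ifP.
have mass x : p x != 0 -> \sum_(z <- enum_supp r) q (z - x) = 1.
  by move=> px; rewrite sum_conv_shift // sum_enum_supp.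
have tv : \sum_(z <- enum_supp r) `|q (z - s) - q (z - t)| <= 17 / 12.
  apply: le_trans (_ : \sum_(z <- enum_supp r)
    (`|q (z - s) - r z| + `|q (z - t) - r z|) <= _).
    by apply: ler_sum => z _; rewrite (distrC (q (z - t))); apply: ler_distD.
  by rewrite big_split /=; have := tv_shift_le ps; have := tv_shift_le pt; lra.
have [z /andP[gs gt]] : exists z, ~~ out (z - s) && ~~ out (z - t).
  apply: (@exists_common_good _ _ (enum_supp r) (fun z => q (z - s)) (fun z => q (z - t))).
  - by move=> z _; apply: (fdist_ge0 hq).
  - by move=> z _; apply: (fdist_ge0 hq).
  rewrite big_split /= (mass _ ps) (mass _ pt).
  by have := out_mass _ ps; have := out_mass _ pt; lra.
have -> : s - t = (z - t) - (z - s) by rewrite opprB [RHS]addrC addrA subrK.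
rewrite -[4]/(2 * 2)%:R natrM -mulrA.
by case: hgam => hchar _; apply: (character_sub_near1 (m := spectral_mean q gam)); rewrite // leNgt.
Qed.

End Convolution.

Theorem proposition4p2 (R : realType) (G : zmodType) (pX pY pZ : G -> R) (eps : R) :
  is_fdist pX -> is_fdist pY -> is_fdist pZ ->
  entropy (conv pX pY) - entropy pY <= 1 / 16 ->
  0 < eps < 1 ->
  exists S : seq G,
    [/\ uniq S, S != [::],
        (forall s, s \in S -> 0 < pX s),
        entropy pZ - 4 * rdist pX pZ - 2 * ln 2 <= ln (size S)%:R
      & forall s t, s \in S -> t \in S -> Bohr (LSpec pY eps) (4 * eps) (s - t)].
Proof.
move=> hX hY hZ hH /andP[eps0 _]; set r := conv pX pY.
pose S := [seq x <- enum_supp pX | kl pY (fun y => r (y + x)) <= 1 / 8].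
have uS : uniq S := filter_uniq _ (enum_supp_uniq pX).
have Sp : {subset S <= enum_supp pX} by move=> x; rewrite mem_filter => /andP[].
have half : 1 / 2 <= \sum_(x <- S) pX x.
  rewrite big_filter; apply: markov_half => [//||x xp|]; first lra.
    by apply: kl_shift_ge0; rewrite // -(mem_enum_supp_fdist hX).
  by have := entropy_conv hX hY; rewrite -/r; lra.
exists S; split => //.
- by apply: contraTneq half => ->; rewrite big_nil -ltNge; lra.
- by move=> s /Sp; apply: enum_supp_gt0.
- rewrite /rdist diff_lawE -(entropy_comp opprK opprK pZ).
  apply: (ruzsa_support_bound hX (fdist_comp opprK opprK hZ) uS Sp half).
- move=> s t; rewrite !mem_filter => /andP[hs sp] /andP[ht tp] gam hgam.
  by apply: (bohr_shift_sub hX hY) => //; rewrite -(mem_enum_supp_fdist hX).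
Qed.
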